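(* Consider the mining game with $N\ge 2$ miners, costs-per-hash $0<c_1\le\dots\le c_N$, reward $R>0$ and capacity parameter $\gamma\ge0$, let $h^*$ be its unique equilibrium hash rate profile, $n$ the number of active miners, and $\pi_i^*$ the equilibrium payoff of miner $i$. Then $(\pi_i^* )_{1\le i\le N}$ is a decreasing sequence with $\pi_i^*>0$ for $1\le i\le n$ and $\pi_i^*=0$ for $n<i\le N$. Moreover, the profit-per-hash of active miners, $(\pi_i^*/h_i^* )_{1\le i\le n}$, is a decreasing sequence.
   Context: Mining game: $N\ge2$ miners with costs-per-hash $0<c_1\le\dots\le c_N$; each miner $i$ chooses $h_i\ge0$, $H=\sum_j h_j$, and the payoff of miner $i$ is $\pi_i=\frac{h_i}{H}R-c_ih_i-\frac{\gamma}{2}h_i^2$ if $H>0$, and $\pi_i=0$ if $H=0$, where $R>0$ and $\gamma\ge 0$. An equilibrium hash rate profile is a pure-strategy Nash equilibrium $h^*\in[0,\infty)^N$; it exists and is unique, and $\pi_i^*$ denotes miner $i$'s payoff at $h^*$. Miner $i$ is active if $h_i^*>0$. A sequence $(x_i)$ is called decreasing if $x_i\ge x_{i+1}$ for all $i$. *)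

From mathcomp Require Import all_boot all_order all_algebra.
From mathcomp Require Import reals.
Set Implicit Arguments. Unset Strict Implicit. Unset Printing Implicit Defensive.
Import Order.TTheory GRing.Theory Num.Theory.
Local Open Scope ring_scope.

(* Mining game with N miners indexed by 'I_N (miner i of the paper is
   the ordinal i-1).  c = costs-per-hash, Rw = reward R, gamma = capacity. *)

Definition payoff (R : realType) (N : nat) (c : 'I_N -> R) (Rw gamma : R)
  (h : 'I_N -> R) (i : 'I_N) : R :=
  let H := \sum_(j < N) h j in
  if 0 < H then h i / H * Rw - c i * h i - gamma / 2 * h i ^+ 2 else 0.

Definition deviate (R : realType) (N : nat) (h : 'I_N -> R) (i : 'I_N) (x : R)
  : 'I_N -> R := fun j => if j == i then x else h j.

Definition is_equilibrium (R : realType) (N : nat) (c : 'I_N -> R) (Rw gamma : R)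
  (h : 'I_N -> R) : Prop :=
  (forall i, 0 <= h i) /\
  (forall i (x : R), 0 <= x ->
     payoff c Rw gamma (deviate h i x) i <= payoff c Rw gamma h i).

Definition num_active (R : realType) (N : nat) (h : 'I_N -> R) : nat :=
  #|[pred i : 'I_N | 0 < h i]|.

From mathcomp Require Import all_boot all_order all_algebra.
From mathcomp Require Import reals.
From mathcomp Require Import lra ring.
Import Order.TTheory GRing.Theory Num.Theory.
Set Implicit Arguments. Unset Strict Implicit.
Local Open Scope ring_scope.

(* At an equilibrium each miner i best-responds to the total S = H - h_i of
   the others.  Here S > 0: a miner alone collects the whole reward with any
   positive hash rate, so halving a positive rate, or entering with a small
   one, always pays and no best response exists.
   Bounding the payoff increments below by a quadratic in the step gives the
   first-order conditions c_i >= R/H - h_i (R/H^2 + gamma), with equality for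
   active miners.  Substituting, pi_i = (R/H^2 + gamma/2) h_i^2, and h_i
   decreases as c_i grows; hence pi_i and pi_i/h_i both decrease in i, and
   pi_i > 0 exactly for the active miners, which are the first n. *)

Lemma slope_le0_of_quadratic_le0 (R : realFieldType) (B D e : R) :
  0 < B -> 0 < e -> (forall t, 0 <= t <= e -> t * D - t ^+ 2 * B <= 0) -> D <= 0.
Proof.
move=> B_gt0 e_gt0 quad_le0; rewrite leNgt; apply/negP => D_gt0.
set t := Num.min e (D / (2 * B)).
have t_gt0 : 0 < t by rewrite lt_min e_gt0 divr_gt0 ?mulr_gt0.
have t_le_e : t <= e by rewrite ge_min lexx.
have t_le : t <= D / (2 * B) by rewrite ge_min lexx orbT.
have tB_le : t * B <= D / 2.
  have -> : D / 2 = D / (2 * B) * B by field; rewrite gt_eqF.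
  by rewrite ler_pM2r.
have := quad_le0 t; rewrite (ltW t_gt0) t_le_e => /(_ isT).
have : t * (t * B) <= t * (D / 2) by rewrite ler_pM2l.
have : 0 < t * D by rewrite mulr_gt0.
rewrite expr2; lra.
Qed.

Section MinerPayoff.

Variables (R : realFieldType) (Rw g : R).
Hypotheses (Rw_gt0 : 0 < Rw) (g_ge0 : 0 <= g).

(* A miner with cost c hashing x against a total S of the others; the marginal
   payoff is the derivative of miner_payoff in x at a. *)
Definition miner_payoff (S c x : R) : R :=
  x / (S + x) * Rw - c * x - g / 2 * x ^+ 2.

Definition marginal_payoff (S c a : R) : R :=
  Rw * S / (S + a) ^+ 2 - c - g * a.

Lemma miner_payoffB (S c a t : R) : 0 < S + a -> 0 < S + a + t ->
  miner_payoff S c (a + t) - miner_payoff S c a =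
  t * marginal_payoff S c a
  - t ^+ 2 * (Rw * S / ((S + a) ^+ 2 * (S + a + t)) + g / 2).
Proof.
move=> Sa_gt0 Sat_gt0; rewrite /miner_payoff /marginal_payoff; field.
by rewrite !gt_eqF.
Qed.

Lemma miner_payoffB_ge (S c a t : R) : 0 < S -> 0 <= a -> - a <= t ->
  t * marginal_payoff S c a - t ^+ 2 * (Rw / (S + a) ^+ 2 + g / 2)
  <= miner_payoff S c (a + t) - miner_payoff S c a.
Proof.
move=> S_gt0 a_ge0 t_ge.
have [Sa_gt0 Sat_gt0] : 0 < S + a /\ 0 < S + a + t by split; lra.
have M_le : Rw * S / ((S + a) ^+ 2 * (S + a + t)) <= Rw / (S + a) ^+ 2.
  rewrite ler_pdivrMr ?mulr_gt0 ?exprn_gt0 // mulrA divfK ?expf_neq0 ?gt_eqF //.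
  by rewrite ler_pM2l //; lra.
rewrite miner_payoffB // lerD2l lerN2.
by apply: ler_wpM2l; rewrite ?sqr_ge0 ?lerD2r.
Qed.

Lemma marginal_payoff_le0 (S c a : R) : 0 < S -> 0 <= a ->
  (forall x, 0 <= x -> miner_payoff S c x <= miner_payoff S c a) ->
  marginal_payoff S c a <= 0.
Proof.
move=> S_gt0 a_ge0 a_max.
apply: (@slope_le0_of_quadratic_le0 _ (Rw / (S + a) ^+ 2 + g / 2) _ 1) => //.
  by apply: ltr_wpDr; rewrite ?divr_ge0 ?divr_gt0 ?exprn_gt0 //; lra.
move=> t /andP [t_ge0 _].
have := miner_payoffB_ge c S_gt0 a_ge0 (_ : - a <= t).
have := a_max (a + t); lra.
Qed.

Lemma marginal_payoff_ge0 (S c a : R) : 0 < S -> 0 < a ->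
  (forall x, 0 <= x -> miner_payoff S c x <= miner_payoff S c a) ->
  0 <= marginal_payoff S c a.
Proof.
move=> S_gt0 a_gt0 a_max; rewrite -oppr_le0.
apply: (@slope_le0_of_quadratic_le0 _ (Rw / (S + a) ^+ 2 + g / 2) _ a) => //.
  by apply: ltr_wpDr; rewrite ?divr_ge0 ?divr_gt0 ?exprn_gt0 //; lra.
move=> t /andP [t_ge0 t_le_a].
have := miner_payoffB_ge c (t := - t) S_gt0 (ltW a_gt0) (_ : - a <= - t).
rewrite sqrrN mulNr; have := a_max (a - t); lra.
Qed.

Lemma miner_payoff_alone (c x : R) : x != 0 ->
  miner_payoff 0 c x = Rw - c * x - g / 2 * x ^+ 2.
Proof. by move=> x_neq0; rewrite /miner_payoff add0r divff // mul1r. Qed.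

Lemma miner_payoff_alone_improvable (c a : R) : 0 < c -> 0 <= a ->
  exists2 x, 0 <= x & miner_payoff 0 c a < miner_payoff 0 c x.
Proof.
move=> c_gt0; rewrite le0r => /orP [/eqP -> | a_gt0].
  have k_gt0 : 0 < c + g + Rw by move: Rw_gt0 g_ge0; lra.
  set k := c + g + Rw in k_gt0 *.
  pose x := Rw / k; have x_gt0 : 0 < x by rewrite divr_gt0.
  have xk : x * k = Rw by rewrite /x divfK ?gt_eqF.
  have x_le1 : x <= 1.
    by rewrite -(ler_pM2r k_gt0) xk mul1r /k; move: c_gt0 g_ge0; lra.
  have gx : g * x ^+ 2 <= g * x.
    by rewrite expr2 mulrA ler_piMr // mulr_ge0 // ltW.
  exists x; first exact: ltW.
  have -> : miner_payoff 0 c 0 = 0.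
    by rewrite /miner_payoff expr0n /= !(mulr0, mul0r, subr0).
  rewrite (miner_payoff_alone c (lt0r_neq0 x_gt0)).
  move: xk; rewrite /k; have := mulr_gt0 c_gt0 x_gt0; have := mulr_gt0 Rw_gt0 x_gt0.
  have := mulr_ge0 g_ge0 (ltW x_gt0); lra.
exists (a / 2); first by rewrite divr_ge0 ?ltW.
rewrite !miner_payoff_alone ?gt_eqF ?divr_gt0 //.
have -> : (a / 2) ^+ 2 = a ^+ 2 / 4 by field.
have := mulr_gt0 c_gt0 a_gt0; have := mulr_ge0 g_ge0 (sqr_ge0 a); lra.
Qed.

Lemma marginal_payoff_subE (H c a : R) : H != 0 ->
  marginal_payoff (H - a) c a = Rw / H - c - a * (Rw / H ^+ 2 + g).
Proof. by move=> H_neq0; rewrite /marginal_payoff subrK; field. Qed.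

Lemma miner_payoff_stationary (H c a : R) : H != 0 ->
  marginal_payoff (H - a) c a = 0 ->
  miner_payoff (H - a) c a = (Rw / H ^+ 2 + g / 2) * a ^+ 2.
Proof.
move=> H_neq0; rewrite marginal_payoff_subE // => stationary.
have -> : c = Rw / H - a * (Rw / H ^+ 2 + g) by lra.
by rewrite /miner_payoff subrK; field.
Qed.

End MinerPayoff.

Lemma card_ord_lt (N m : nat) : (m <= N)%N -> #|[pred k : 'I_N | (k < m)%N]| = m.
Proof.
move=> le_mN; have widen_inj : injective (widen_ord le_mN).
  by move=> k l /(congr1 val) eq_kl; apply: val_inj.
rewrite -[RHS](card_ord m) -(card_imset _ widen_inj).
apply: eq_card => k; rewrite inE /=.
apply/idP/imsetP => [lt_km | [l _ ->]]; last exact: ltn_ord l.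
by exists (Ordinal lt_km) => //; apply: val_inj.
Qed.

Lemma ltn_num_active (R : realType) (N : nat) (h : 'I_N -> R) :
  (forall i j : 'I_N, (i <= j)%N -> h j <= h i) ->
  forall i : 'I_N, (i < num_active h)%N = (0 < h i).
Proof.
move=> h_anti i; apply/idP/idP => [|hi_gt0].
  apply: contraTT; rewrite -leqNgt => hi_le0.
  rewrite /num_active -[X in (_ <= X)%N](card_ord_lt (ltnW (ltn_ord i))).
  apply/subset_leq_card/subsetP => k; rewrite !inE => hk_gt0.
  rewrite ltnNge; apply: contraNN hi_le0 => le_ik.
  exact: lt_le_trans hk_gt0 (h_anti _ _ le_ik).
rewrite /num_active -[X in (X <= _)%N](card_ord_lt (ltn_ord i)).
apply/subset_leq_card/subsetP => k; rewrite !inE ltnS => le_ki.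
exact: lt_le_trans hi_gt0 (h_anti _ _ le_ki).
Qed.

Lemma sum_deviate (R : realType) (N : nat) (h : 'I_N -> R) (i : 'I_N) (x : R) :
  \sum_(j < N) deviate h i x j = \sum_(j < N) h j - h i + x.
Proof.
rewrite (bigD1 i) //= [in RHS](bigD1 i) //= /deviate eqxx.
rewrite (eq_bigr h) => [|j /negbTE -> //].
by rewrite [h i + _]addrC addrK addrC.
Qed.

Section Equilibrium.

Variables (R : realType) (N : nat) (c : 'I_N -> R) (Rw gamma : R) (h : 'I_N -> R).
Hypotheses (c_gt0 : forall i, 0 < c i) (Rw_gt0 : 0 < Rw) (gamma_ge0 : 0 <= gamma).
Hypothesis h_equilibrium : is_equilibrium c Rw gamma h.

Local Notation H := (\sum_(j < N) h j).
Local Notation payoff := (payoff c Rw gamma).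
Local Notation miner_payoff := (miner_payoff Rw gamma).
Local Notation marginal_payoff := (marginal_payoff Rw gamma).

Let h_ge0 : forall i, 0 <= h i := proj1 h_equilibrium.

Lemma hash_le_total (i : 'I_N) : h i <= H.
Proof. by rewrite (bigD1 i) //= lerDl sumr_ge0. Qed.

Lemma payoff_deviate (i : 'I_N) (x : R) : 0 <= x ->
  payoff (deviate h i x) i = miner_payoff (H - h i) (c i) x.
Proof.
move=> x_ge0; rewrite /payoff sum_deviate /deviate eqxx; case: ifP => // /negbT.
have := hash_le_total i; rewrite -leNgt => le_hi_H le0.
have -> : x = 0 by lra.
by rewrite /miner_payoff expr0n /= !(mulr0, mul0r, subr0).
Qed.

Lemma payoff_self (i : 'I_N) : payoff h i = miner_payoff (H - h i) (c i) (h i).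
Proof. by rewrite -payoff_deviate // /payoff sum_deviate subrK /deviate eqxx. Qed.

Lemma equilibrium_best_response (i : 'I_N) (x : R) : 0 <= x ->
  miner_payoff (H - h i) (c i) x <= miner_payoff (H - h i) (c i) (h i).
Proof.
by move=> x_ge0; rewrite -payoff_self -payoff_deviate //; apply: h_equilibrium.2.
Qed.

Lemma equilibrium_others_gt0 (i : 'I_N) : 0 < H - h i.
Proof.
have : 0 <= H - h i by rewrite subr_ge0 hash_le_total.
rewrite le0r => /orP [/eqP others0 | //].
have [x x_ge0] := miner_payoff_alone_improvable Rw_gt0 gamma_ge0 (c_gt0 i) (h_ge0 i).
by rewrite -others0 ltNge equilibrium_best_response.
Qed.

Lemma equilibrium_total_gt0 (i : 'I_N) : 0 < H.
Proof. by have := equilibrium_others_gt0 i; have := h_ge0 i; lra. Qed.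

Lemma equilibrium_marginal_le0 (i : 'I_N) :
  marginal_payoff (H - h i) (c i) (h i) <= 0.
Proof.
exact: marginal_payoff_le0 (equilibrium_others_gt0 i) (h_ge0 i)
  (equilibrium_best_response i).
Qed.

Lemma equilibrium_marginal_eq0 (i : 'I_N) : 0 < h i ->
  marginal_payoff (H - h i) (c i) (h i) = 0.
Proof.
move=> hi_gt0; apply/eqP; rewrite eq_le equilibrium_marginal_le0.
exact: marginal_payoff_ge0 (equilibrium_others_gt0 i) hi_gt0
  (equilibrium_best_response i).
Qed.

Lemma equilibrium_payoffE (i : 'I_N) :
  payoff h i = (Rw / H ^+ 2 + gamma / 2) * h i ^+ 2.
Proof.
have := h_ge0 i; rewrite le0r payoff_self => /orP [/eqP -> | hi_gt0].
  by rewrite /miner_payoff expr0n /= !(mulr0, mul0r, subr0).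
apply: miner_payoff_stationary; first exact/lt0r_neq0/(equilibrium_total_gt0 i).
exact: equilibrium_marginal_eq0.
Qed.

Hypothesis c_mono : forall i j : 'I_N, (i <= j)%N -> c i <= c j.

Lemma equilibrium_hash_antitone (i j : 'I_N) : (i <= j)%N -> h j <= h i.
Proof.
move=> le_ij; have := h_ge0 j; rewrite le0r => /orP [/eqP -> | hj_gt0].
  exact: h_ge0.
have H_neq0 := lt0r_neq0 (equilibrium_total_gt0 i).
have := equilibrium_marginal_le0 i; have := equilibrium_marginal_eq0 hj_gt0.
rewrite !marginal_payoff_subE // => marginal_j marginal_i.
have slope_gt0 : 0 < Rw / H ^+ 2 + gamma.
  by rewrite ltr_wpDr // divr_gt0 // exprn_gt0 // (equilibrium_total_gt0 i).
rewrite -(ler_pM2r slope_gt0); have := c_mono le_ij; lra.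
Qed.

End Equilibrium.

Theorem proposition4p3 (R : realType) (N : nat) (c : 'I_N -> R) (Rw gamma : R)
  (h : 'I_N -> R) :
  (2 <= N)%N ->
  (forall i, 0 < c i) ->
  (forall i j : 'I_N, (i <= j)%N -> c i <= c j) ->
  0 < Rw -> 0 <= gamma ->
  is_equilibrium c Rw gamma h ->
  (forall i j : 'I_N, (i <= j)%N -> payoff c Rw gamma h j <= payoff c Rw gamma h i)
  /\ (forall i : 'I_N, (i < num_active h)%N -> 0 < payoff c Rw gamma h i)
  /\ (forall i : 'I_N, (num_active h <= i)%N -> payoff c Rw gamma h i = 0)
  /\ (forall i j : 'I_N, (i <= j)%N -> (j < num_active h)%N ->
        payoff c Rw gamma h j / h j <= payoff c Rw gamma h i / h i).
Proof.
move=> N_ge2 c_gt0 c_mono Rw_gt0 gamma_ge0 h_eq.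
have payoffE := equilibrium_payoffE c_gt0 Rw_gt0 gamma_ge0 h_eq.
have h_anti := equilibrium_hash_antitone c_gt0 Rw_gt0 gamma_ge0 h_eq c_mono.
have active := ltn_num_active h_anti.
have H_gt0 :=
  equilibrium_total_gt0 c_gt0 Rw_gt0 gamma_ge0 h_eq (Ordinal (ltnW N_ge2)).
set K := Rw / _ ^+ 2 + gamma / 2 in payoffE.
have K_gt0 : 0 < K by rewrite ltr_wpDr ?divr_ge0 // divr_gt0 // exprn_gt0.
split; [|split; [|split]] => [i j le_ij | i | i | i j le_ij].
- rewrite !payoffE ler_pM2l // !expr2.
  by apply: ler_pM; rewrite ?h_anti ?h_eq.1.
- by rewrite active payoffE => hi_gt0; rewrite mulr_gt0 // exprn_gt0.
- rewrite leqNgt active payoffE => hi_le0.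
  have -> : h i = 0 by apply/eqP; rewrite eq_le h_eq.1 andbT leNgt.
  by rewrite expr0n /= mulr0.
- rewrite active => hj_gt0; have hi_gt0 := lt_le_trans hj_gt0 (h_anti _ _ le_ij).
  rewrite !payoffE !expr2 !mulrA !mulfK ?lt0r_neq0 // ler_pM2l //.
  exact: h_anti.
Qed.
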